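(* Fix $\alpha\in(0,1)$ and $\nu\in(0,\alpha)$, and suppose the confidence regions at level $\alpha-\nu$, $\{C^{(\alpha-\nu)}_{\gamma\cdot\Gamma'}\}_{\Gamma'\subseteq\Gamma}$, are nested. Define the data-dependent set of targets $$\widehat\Gamma^+_\nu=\widehat\Gamma^+_\nu(y)=\bigcup_{P'\in B_\nu(y)}\Gamma_\nu(P')=\bigcup_{P'\in B_\nu(y)}\ \bigcup_{y'\in A_\nu(P')}\widehat\Gamma(y').$$ Then for every $P\in\mathcal P$, when $y\sim P$, $$P\left\{\theta_\gamma(P)\in C^{(\alpha-\nu)}_{\gamma\cdot\widehat\Gamma^+_\nu},\ \forall\gamma\in\widehat\Gamma(y)\right\}\ge 1-\alpha.$$
   Context: Let $\mathcal P$ be a (possibly nonparametric) family of distributions of an observation $y$. There is an index set $\Gamma$ of targets, and for each $P\in\mathcal P$ a family of estimands $\{\theta_\gamma(P)\}_{\gamma\in\Gamma}$. A selection rule $y\mapsto\widehat\Gamma(y)\subseteq\Gamma$ chooses a data-dependent set of targets. For every subset $\Gamma'\subseteq\Gamma$ and every level $\beta\in(0,1)$ we have confidence regions $\{C^{\beta}_{\gamma\cdot\Gamma'}\}_{\gamma\in\Gamma'}$ (functions of $y$) that are simultaneously valid: for every $P\in\mathcal P$, $P\{\theta_\gamma(P)\in C^{\beta}_{\gamma\cdot\Gamma'}\ \forall\gamma\in\Gamma'\}\ge1-\beta$. The regions at level $\beta$ are called nested if for all $\Gamma_1\subseteq\Gamma_2\subseteq\Gamma$ and all $\gamma\in\Gamma_1$,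 $C^\beta_{\gamma\cdot\Gamma_1}\subseteq C^\beta_{\gamma\cdot\Gamma_2}$. For each $P\in\mathcal P$ and $\nu\in(0,1)$, $A_\nu(P)$ is a set of observations with $P\{y\in A_\nu(P)\}\ge1-\nu$ (an acceptance region). The set of plausible targets under $P$ is $\Gamma_\nu(P)=\bigcup_{y'\in A_\nu(P)}\widehat\Gamma(y')$, and the inversion is $B_\nu(y)=\{P\in\mathcal P: y\in A_\nu(P)\}$. *)

From HB Require Import structures.
From mathcomp Require Import all_boot all_order all_algebra.
From mathcomp Require Import all_classical all_reals all_analysis.
Set Implicit Arguments. Unset Strict Implicit. Unset Printing Implicit Defensive.
Import Order.TTheory GRing.Theory Num.Theory.
Local Open Scope classical_set_scope.
Local Open Scope ring_scope.

(* Coincides with P E when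
   E is measurable. Used to read "P{ ... } >= c" without measurability
   assumptions. *)
Definition inner_prob {d} {Y : measurableType d} {R : realType}
  (P : probability Y R) (E : set Y) : \bar R :=
  ereal_sup [set P F | F in [set F | measurable F /\ F `<=` E]].

Definition plausible_targets {d} {Y : measurableType d} {R : realType} {Gamma : Type}
  (Ghat : Y -> set Gamma) (A : R -> probability Y R -> set Y)
  (nu : R) (P : probability Y R) : set Gamma :=
  \bigcup_(y' in A nu P) Ghat y'.

Definition inversion {d} {Y : measurableType d} {R : realType}
  (Pfam : set (probability Y R)) (A : R -> probability Y R -> set Y)
  (nu : R) (y : Y) : set (probability Y R) :=
  [set P' | Pfam P' /\ A nu P' y].

Definition Gamma_plus {d} {Y : measurableType d} {R : realType} {Gamma : Type}
  (Pfam : set (probability Y R)) (Ghat : Y -> set Gamma)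
  (A : R -> probability Y R -> set Y) (nu : R) (y : Y) : set Gamma :=
  \bigcup_(P' in inversion Pfam A nu y) plausible_targets Ghat A nu P'.

Definition nested {R : realType} {Gamma Y Theta : Type}
  (C : R -> set Gamma -> Gamma -> Y -> set Theta) (beta : R) : Prop :=
  forall (G1 G2 : set Gamma), G1 `<=` G2 ->
    forall g, G1 g -> forall y, C beta G1 g y `<=` C beta G2 g y.

From HB Require Import structures.
From mathcomp Require Import all_boot all_order all_algebra.
From mathcomp Require Import all_classical all_reals all_analysis.
From mathcomp Require Import lra.
Import Order.TTheory GRing.Theory Num.Theory.
Local Open Scope classical_set_scope.
Local Open Scope ring_scope.

(* On the event that [y] lies in the acceptance region of the true [P], [P]
   itself belongs to [B_nu(y)], so [Gamma_nu(P) ⊆ Ghat^+_nu(y)] and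
   [Ghat(y) ⊆ Gamma_nu(P)]; by nestedness, simultaneous coverage of
   [Gamma_nu(P)] at level [alpha - nu] then implies coverage of every selected
   target by the regions indexed by [Ghat^+_nu(y)].  The fixed set
   [Gamma_nu(P)] does not depend on the data, so the Bonferroni bound
   [(1 - nu) + (1 - (alpha - nu)) - 1 = 1 - alpha] concludes. *)

Section InnerProbability.
Context {d} {Y : measurableType d} {R : realType} (P : probability Y R).

Lemma inner_probS (E E' : set Y) :
  E `<=` E' -> (inner_prob P E <= inner_prob P E')%E.
Proof.
move=> EE'; apply: ereal_sup_le => _ [F [mF FE] <-].
by exists F => //; split => //; exact: subset_trans EE'.
Qed.

Lemma inner_prob_ge_measurable {E F : set Y} :
  measurable F -> F `<=` E -> (P F <= inner_prob P E)%E.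
Proof. by move=> mF FE; apply: ereal_sup_ubound; exists F. Qed.

Lemma inner_prob_approx (E : set Y) (a : R) :
  (a%:E < inner_prob P E)%E ->
  exists2 F, measurable F /\ F `<=` E & (a%:E < P F)%E.
Proof. by move=> /ereal_sup_gt[_ [F FE <-] aPF]; exists F. Qed.

Lemma probabilityI_ge {F1 F2 : set Y} : measurable F1 -> measurable F2 ->
  ((fine (P F1) + fine (P F2) - 1)%:E <= P (F1 `&` F2))%E.
Proof.
move=> mF1 mF2.
have f1 := fin_num_measure P _ mF1.
have f2 := fin_num_measure P _ mF2.
have fI := fin_num_measure P _ (measurableI _ _ mF1 mF2).
have U := probability_le1 P (measurableU _ _ mF1 mF2).
rewrite measureUfinl ?ltey_eq ?f1 // leeBlDr // in U.
by rewrite EFinB EFinD !fineK // leeBlDl.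
Qed.

(* Bonferroni's inequality for inner probabilities: no measurability of the
   events is needed, since each is approximated from inside. *)
Lemma inner_probI_ge {E1 E2 : set Y} {a b : R} :
  (a%:E <= inner_prob P E1)%E -> (b%:E <= inner_prob P E2)%E ->
  ((a + b - 1)%:E <= inner_prob P (E1 `&` E2))%E.
Proof.
move=> aE1 bE2; apply/lee_addgt0Pr => e e0.
have [F1 [mF1 F1E1] aF1] : exists2 F, measurable F /\ F `<=` E1
    & ((a - e / 2)%:E < P F)%E.
  by apply: inner_prob_approx; apply: lt_le_trans aE1; rewrite lte_fin; lra.
have [F2 [mF2 F2E2] bF2] : exists2 F, measurable F /\ F `<=` E2
    & ((b - e / 2)%:E < P F)%E.
  by apply: inner_prob_approx; apply: lt_le_trans bE2; rewrite lte_fin; lra.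
have F12E : F1 `&` F2 `<=` E1 `&` E2 by move=> y [/F1E1 ? /F2E2 ?].
have mF12 := measurableI _ _ mF1 mF2.
have PF12 := inner_prob_ge_measurable mF12 F12E.
apply: le_trans (leeD2r _ PF12); apply: le_trans (leeD2r _ (probabilityI_ge mF1 mF2)).
rewrite -(fineK (fin_num_measure P _ mF1)) -(fineK (fin_num_measure P _ mF2)) in aF1 bF2.
by move: aF1 bF2; rewrite -EFinD !lte_fin lee_fin; lra.
Qed.

End InnerProbability.

Section PlausibleTargets.
Context {d} {Y : measurableType d} {R : realType} {Gamma : Type}
  {Pfam : set (probability Y R)} (Ghat : Y -> set Gamma)
  {A : R -> probability Y R -> set Y} {nu : R}.

Lemma selected_sub_plausible {P : probability Y R} {y : Y} :
  A nu P y -> Ghat y `<=` plausible_targets Ghat A nu P.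
Proof. by move=> Ay g Gg; exists y. Qed.

Lemma plausible_sub_Gamma_plus {P : probability Y R} {y : Y} :
  Pfam P -> A nu P y -> plausible_targets Ghat A nu P `<=` Gamma_plus Pfam Ghat A nu y.
Proof. by move=> PP Ay g Gg; exists P. Qed.

End PlausibleTargets.

Theorem theorem1 (R : realType) (d : measure_display) (Y : measurableType d)
  (Pfam : set (probability Y R)) (Gamma Theta : Type)
  (theta : probability Y R -> Gamma -> Theta)
  (Ghat : Y -> set Gamma)
  (C : R -> set Gamma -> Gamma -> Y -> set Theta)
  (A : R -> probability Y R -> set Y)
  (C_valid : forall (G' : set Gamma) (beta : R), 0 < beta < 1 ->
     forall P, Pfam P ->
       ((1 - beta)%:E <= inner_prob P
          [set y | forall g, G' g -> C beta G' g y (theta P g)])%E)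
  (A_accept : forall P, Pfam P -> forall nu : R, 0 < nu < 1 ->
       ((1 - nu)%:E <= inner_prob P (A nu P))%E)
  (alpha nu : R) (halpha : 0 < alpha < 1) (hnu : 0 < nu < alpha)
  (hnest : nested C (alpha - nu)) :
  forall P, Pfam P ->
    ((1 - alpha)%:E <= inner_prob P
       [set y | forall g, Ghat y g ->
          C (alpha - nu)%R (Gamma_plus Pfam Ghat A nu y) g y (theta P g)])%E.
Proof.
move=> P PP.
set G := plausible_targets Ghat A nu P.
have nu01 : 0 < nu < 1 by apply/andP; split; lra.
have beta01 : 0 < alpha - nu < 1 by apply/andP; split; lra.
have := inner_probI_ge P (A_accept P PP nu nu01) (C_valid G _ beta01 P PP).
have -> : 1 - nu + (1 - (alpha - nu)) - 1 = 1 - alpha by lra.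
move/le_trans; apply; apply: (inner_probS P) => y [Ay coverG] g Gg.
have Gg' := selected_sub_plausible Ghat Ay g Gg.
exact: (hnest G _ (plausible_sub_Gamma_plus Ghat PP Ay) g Gg' y _ (coverG g Gg')).
Qed.
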